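(* For every $p>0$ there exists $C_p>0$ such that for every $x\in\mathbb Z_{\ge0}$ and all integers $0\le m\le k\le n$, $$\mathbf E^n_x\big[|S_k-S_m|^p\big]\le C_p\,|k-m|^{p/2}.$$
   Context: $\mathbf P^n_x$ is the uniform probability measure on the finite set of paths $(s_0,\dots,s_n)\in\mathbb Z_{\ge0}^{n+1}$ with $s_0=x$ and $|s_{i+1}-s_i|=1$ for all $i$ (simple symmetric random walk conditioned to stay non-negative up to time $n$), $S$ is its coordinate process and $\mathbf E^n_x$ the corresponding expectation. *)

From Stdlib Require Import Reals List Arith.
Open Scope R_scope.

(* nonnegative paths (s_0,...,s_n) in Z_{>=0}^{n+1} with s_0 = x and
   |s_{i+1} - s_i| = 1, enumerated (without repetition) as lists of nat
   of length n+1 *)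
Fixpoint paths (n x : nat) : list (list nat) :=
  match n with
  | O => (x :: nil) :: nil
  | S n' =>
      map (cons x) (paths n' (S x)) ++
      match x with
      | O => nil
      | S x' => map (cons x) (paths n' x')
      end
  end.

(* a characterization for documentation: membership = valid path *)
Fixpoint valid_path (x : nat) (s : list nat) : Prop :=
  match s with
  | nil => False
  | y :: nil => y = x
  | y :: ((z :: _) as t) => y = x /\ (z = S y \/ S z = y) /\ valid_path z t
  end.

Definition coord (s : list nat) (k : nat) : R := INR (nth k s O).

Definition Exp (n x : nat) (f : list nat -> R) : R :=
  fold_right Rplus 0 (map f (paths n x)) / INR (length (paths n x)).

(* a^p for a >= 0 and real p > 0, with the convention 0^p = 0
   (Stdlib's Rpower 0 p would give 1) *)
Definition rpow (a p : R) : R :=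
  if Req_EM_T a 0 then 0 else Rpower a p.

(* The heights of a uniform nonnegative path form a Markov chain: from height [y] it moves
   up with probability [A/(A+B)], where [A] and [B] count the continuations from [y+1]
   and [y-1], and a ratio estimate between these counts bounds its drift by [1/y].
   Hence [cosh (lam (S_k - r)) / (cosh lam + 2 lam sinh lam)^k] is a supermartingale, so
   [E cosh (lam (S_{m+d} - S_m)) <= (1 + 5 lam^2)^d <= exp (5 lam^2 d)].  At the scale
   [lam = 1 / (2 sqrt d)] this is at most [exp (5/4)], and [|u|^p <= (p/lam)^p exp (lam |u|)]
   turns it into the bound with [C_p = 2 (2p)^p exp (5/4)]. *)

From Stdlib Require Import Reals List Arith Lra Lia.
Open Scope R_scope.

Lemma exp_le_compat x y : x <= y -> exp x <= exp y.
Proof.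
intro H; destruct (Rle_lt_or_eq_dec _ _ H) as [Hlt| ->]; [left; apply exp_increasing|]; lra.
Qed.

Lemma exp_mul_exp_opp t : exp t * exp (- t) = 1.
Proof. rewrite <- exp_plus, Rplus_opp_r; apply exp_0. Qed.

Lemma cosh_pos t : 0 < cosh t.
Proof. unfold cosh; pose proof (exp_pos t); pose proof (exp_pos (- t)); lra. Qed.

Lemma cosh_plus x y : cosh (x + y) = cosh x * cosh y + sinh x * sinh y.
Proof. unfold cosh, sinh; rewrite Ropp_plus_distr, !exp_plus; field. Qed.

Lemma cosh_minus x y : cosh (x - y) = cosh x * cosh y - sinh x * sinh y.
Proof.
unfold cosh, sinh, Rminus; rewrite Ropp_plus_distr, Ropp_involutive, !exp_plus; field.
Qed.

Lemma sinh_nonneg t : 0 <= t -> 0 <= sinh t.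
Proof.
intro H; rewrite <- sinh_0; destruct (Rle_lt_or_eq_dec _ _ H) as [Hlt| <-];
  [left; apply sinh_lt|]; lra.
Qed.

Lemma sinh_nonpos t : t <= 0 -> sinh t <= 0.
Proof.
intro H; rewrite <- sinh_0; destruct (Rle_lt_or_eq_dec _ _ H) as [Hlt| ->];
  [left; apply sinh_lt|]; lra.
Qed.

Lemma sinh_le_cosh t : 0 <= t -> sinh t <= 2 * t * cosh t.
Proof.
intro Ht; unfold sinh, cosh.
pose proof (exp_ineq1_le (- t)); pose proof (exp_ineq1_le t).
pose proof (exp_mul_exp_opp t); pose proof (exp_pos (- t)).
assert (exp t - 1 <= t * exp t) by nra.
nra.
Qed.

Lemma exp_abs_le_cosh t : exp (Rabs t) <= 2 * cosh t.
Proof.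
unfold cosh; pose proof (exp_pos t); pose proof (exp_pos (- t)).
destruct (Rcase_abs t); [rewrite Rabs_left|rewrite Rabs_right]; lra.
Qed.

Definition cosh_growth (lam : R) : R := cosh lam + 2 * lam * sinh lam.

Lemma cosh_growth_pos lam : 0 <= lam -> 0 < cosh_growth lam.
Proof.
intro Hlam; unfold cosh_growth.
pose proof (cosh_pos lam); pose proof (sinh_nonneg lam Hlam); nra.
Qed.

Lemma cosh_growth_le lam : 0 <= lam <= 1/2 -> cosh_growth lam <= 1 + 5 * lam ^ 2.
Proof.
intros [H0 H1]; unfold cosh_growth, cosh, sinh.
pose proof (exp_ineq1_le (- lam)); pose proof (exp_ineq1_le lam).
pose proof (exp_mul_exp_opp lam); pose proof (exp_pos lam); pose proof (exp_pos (- lam)).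
set (e := exp lam) in *; set (e' := exp (- lam)) in *.
(* [e <= 1 / (1 - lam)] and [e' = 1 / e <= 1 / (1 + lam)], expanded to second order. *)
assert (Ee : e <= 1 + lam + 2 * lam ^ 2).
{ assert (e * (1 - lam) <= 1) by nra.
  assert (1 <= (1 - lam) * (1 + lam + 2 * lam ^ 2)) by nra. nra. }
assert (Ee' : e' <= 1 - lam + lam ^ 2) by nra.
nra.
Qed.

Lemma cosh_growth_pow_le lam d : 0 <= lam <= 1/2 ->
  cosh_growth lam ^ d <= exp (5 * lam ^ 2 * INR d).
Proof.
intro Hlam.
replace (5 * lam ^ 2 * INR d) with (INR d * (5 * lam ^ 2)) by ring.
replace (exp (INR d * (5 * lam ^ 2))) with (exp (5 * lam ^ 2) ^ d)
  by (rewrite <- Rpower_pow by apply exp_pos; unfold Rpower; rewrite ln_exp; reflexivity).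
apply pow_incr; split; [left; apply cosh_growth_pos; lra|].
apply Rle_trans with (1 + 5 * lam ^ 2); [apply cosh_growth_le; lra|].
apply exp_ineq1_le.
Qed.

(* [A cosh (v + lam) + B cosh (v - lam) = (A + B) cosh v cosh lam + (A - B) sinh v sinh lam],
   and the drift hypothesis bounds [(A - B) sinh v] by [2 lam (A + B) cosh v]. *)
Lemma cosh_step_le lam A B u : 0 <= lam -> 0 <= B <= A ->
  (0 < u -> (A - B) * u <= A + B) ->
  A * cosh (lam * (u + 1)) + B * cosh (lam * (u - 1))
  <= cosh_growth lam * (A + B) * cosh (lam * u).
Proof.
intros Hlam HAB Hdrift; unfold cosh_growth.
replace (lam * (u + 1)) with (lam * u + lam) by ring.
replace (lam * (u - 1)) with (lam * u - lam) by ring.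
rewrite cosh_plus, cosh_minus.
pose proof (sinh_nonneg lam Hlam); pose proof (cosh_pos (lam * u)).
assert ((A - B) * sinh (lam * u) <= 2 * lam * (A + B) * cosh (lam * u)).
{ destruct (Rle_lt_dec u 0) as [Hu|Hu].
  - pose proof (sinh_nonpos (lam * u) ltac:(nra)).
    assert (0 <= 2 * lam * (A + B) * cosh (lam * u)) by (apply Rmult_le_pos; nra).
    nra.
  - pose proof (sinh_le_cosh (lam * u) ltac:(nra)); specialize (Hdrift Hu).
    apply Rle_trans with ((A - B) * u * (2 * lam * cosh (lam * u))).
    + replace ((A - B) * u * (2 * lam * cosh (lam * u)))
        with ((A - B) * (2 * (lam * u) * cosh (lam * u))) by ring.
      apply Rmult_le_compat_l; lra.
    + replace (2 * lam * (A + B) * cosh (lam * u))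
        with ((A + B) * (2 * lam * cosh (lam * u))) by ring.
      apply Rmult_le_compat_r; nra. }
nra.
Qed.

Lemma Rpower_le_exp p lam t : 0 < p -> 0 < lam -> 0 < t ->
  Rpower t p <= Rpower (p / lam) p * exp (lam * t).
Proof.
intros Hp Hlam Ht; unfold Rpower; rewrite <- exp_plus; apply exp_le_compat.
(* [ln v <= v - 1] at [v = lam t / p]. *)
set (v := lam * t / p).
assert (Hv : 0 < v) by (unfold v; apply Rdiv_lt_0_compat; nra).
assert (Hlnv : ln v = ln t - ln (p / lam)).
{ unfold v, Rdiv; rewrite !ln_mult, !ln_Rinv by (try apply Rinv_0_lt_compat; nra); ring. }
assert (Hpv : p * v = lam * t) by (unfold v; field; lra).
pose proof (exp_ineq1_le (ln v)) as Hln; rewrite exp_ln in Hln by lra.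
assert (p * (1 + ln v) <= p * v) by (apply Rmult_le_compat_l; lra).
rewrite Hlnv in *; nra.
Qed.

Lemma rpow_0 p : rpow 0 p = 0.
Proof. unfold rpow; destruct (Req_EM_T 0 0); [reflexivity|contradiction]. Qed.

Lemma rpow_pos a p : 0 < a -> rpow a p = Rpower a p.
Proof. intro Ha; unfold rpow; destruct (Req_EM_T a 0); [lra|reflexivity]. Qed.

Lemma rpow_abs_le_cosh p lam u : 0 < p -> 0 < lam ->
  rpow (Rabs u) p <= 2 * Rpower (p / lam) p * cosh (lam * u).
Proof.
intros Hp Hlam.
assert (0 < Rpower (p / lam) p) by apply exp_pos.
pose proof (cosh_pos (lam * u)).
unfold rpow; destruct (Req_EM_T (Rabs u) 0) as [_|Hu]; [nra|].
apply Rle_trans with (Rpower (p / lam) p * exp (lam * Rabs u)).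
- apply Rpower_le_exp; [lra|lra|]; pose proof (Rabs_pos u); lra.
- replace (lam * Rabs u) with (Rabs (lam * u)) by (rewrite Rabs_mult, Rabs_right; lra).
  pose proof (exp_abs_le_cosh (lam * u)); nra.
Qed.

Definition sumR {A : Type} (f : A -> R) (l : list A) : R := fold_right Rplus 0 (map f l).

Lemma sumR_app {A} (f : A -> R) l1 l2 : sumR f (l1 ++ l2) = sumR f l1 + sumR f l2.
Proof. unfold sumR; induction l1 as [|a l1 IH]; simpl; [ring|]; rewrite IH; ring. Qed.

Lemma sumR_map {A B} (f : B -> R) (g : A -> B) l : sumR f (map g l) = sumR (fun a => f (g a)) l.
Proof. unfold sumR; rewrite map_map; reflexivity. Qed.

Lemma sumR_le {A} (f g : A -> R) l : (forall a, In a l -> f a <= g a) -> sumR f l <= sumR g l.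
Proof.
unfold sumR; induction l as [|a l IH]; simpl; intro H; [lra|].
pose proof (H a (or_introl eq_refl)); pose proof (IH (fun b Hb => H b (or_intror Hb))); lra.
Qed.

Lemma sumR_const {A} c (l : list A) : sumR (fun _ => c) l = c * INR (length l).
Proof.
unfold sumR; induction l as [|a l IH]; [simpl; ring|].
cbn [map fold_right length]; rewrite S_INR, IH; ring.
Qed.

Lemma sumR_scal {A} a (f : A -> R) l : sumR (fun s => a * f s) l = a * sumR f l.
Proof. unfold sumR; induction l as [|b l IH]; simpl; [ring|]; rewrite IH; ring. Qed.

Definition npaths (n x : nat) : nat := length (paths n x).

Lemma npaths_S n x :
  npaths (S n) x = (npaths n (S x) + match x with O => O | S x' => npaths n x' end)%nat.
Proof.
unfold npaths; cbn [paths]; rewrite length_app, length_map.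
destruct x; rewrite ?length_map; simpl; lia.
Qed.

Lemma npaths_pos n x : (0 < npaths n x)%nat.
Proof.
revert x; induction n as [|n IHn]; intro x; [unfold npaths; simpl; lia|].
rewrite npaths_S; specialize (IHn (S x)); lia.
Qed.

Lemma npaths_le_S n x : (npaths n x <= npaths n (S x))%nat.
Proof.
revert x; induction n as [|n IHn]; intro x; [unfold npaths; simpl; lia|].
rewrite !npaths_S; pose proof (IHn (S x)); destruct x; [lia|].
pose proof (IHn x); lia.
Qed.

Lemma npaths_ratio n z : (z * npaths n (S (S z)) <= S (S z) * npaths n z)%nat.
Proof.
revert z; induction n as [|n IHn]; intro z; [unfold npaths; simpl; lia|].
destruct z as [|w]; [lia|].
rewrite !npaths_S; pose proof (IHn (S (S w))); pose proof (IHn w); nia.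
Qed.

(* With [A = npaths n (y+2)] and [B = npaths n y]: the drift [(A-B)/(A+B)] of the walk
   at height [y+1] is at most [1/(y+1)]. *)
Lemma npaths_drift n y u : 0 < u -> u <= INR (S y) ->
  (INR (npaths n (S (S y))) - INR (npaths n y)) * u
  <= INR (npaths n (S (S y))) + INR (npaths n y).
Proof.
intros Hu Huy.
pose proof (npaths_le_S n y); pose proof (npaths_le_S n (S y)).
assert (Hratio : INR y * INR (npaths n (S (S y))) <= (INR y + 2) * INR (npaths n y)).
{ replace (INR y + 2) with (INR (S (S y))) by (rewrite !S_INR; ring).
  rewrite <- !mult_INR; apply le_INR, npaths_ratio. }
assert (INR (npaths n y) <= INR (npaths n (S (S y)))) by (apply le_INR; lia).
pose proof (pos_INR (npaths n y)); pose proof (pos_INR y); rewrite S_INR in Huy.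
nra.
Qed.

Lemma sumR_paths_S f n x : sumR f (paths (S n) x) =
  sumR (fun s => f (x :: s)) (paths n (S x)) +
  match x with O => 0 | S x' => sumR (fun s => f (x :: s)) (paths n x') end.
Proof.
cbn [paths]; rewrite sumR_app, sumR_map.
destruct x; [unfold sumR; simpl; ring|]; rewrite sumR_map; reflexivity.
Qed.

Lemma paths_head n y s : In s (paths n y) -> coord s 0 = INR y.
Proof.
unfold coord; destruct n as [|n]; simpl; intro H.
- destruct H as [<-|[]]; reflexivity.
- apply in_app_iff in H; destruct H as [H|H]; [|destruct y as [|y']; [destruct H|]];
    apply in_map_iff in H; destruct H as [t [<- _]]; reflexivity.
Qed.

Lemma coord_skipn m s j : coord (skipn m s) j = coord s (m + j).
Proof. unfold coord; rewrite nth_skipn; reflexivity. Qed.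

Lemma Exp_le n x f c : sumR f (paths n x) <= c * INR (npaths n x) -> Exp n x f <= c.
Proof.
intro H; unfold Exp; fold (sumR f (paths n x)).
assert (HN : 0 < INR (npaths n x)) by (apply lt_0_INR, npaths_pos).
unfold npaths in *; unfold Rdiv; apply (Rmult_le_reg_r _ _ _ HN).
rewrite Rmult_assoc, Rinv_l by lra; lra.
Qed.

Lemma sumR_cosh_le lam d : 0 <= lam -> forall n y r, (d <= n)%nat ->
  sumR (fun s => cosh (lam * (coord s d - INR r))) (paths n y)
  <= cosh_growth lam ^ d * INR (npaths n y) * cosh (lam * (INR y - INR r)).
Proof.
intro Hlam; induction d as [|d IHd]; intros n y r Hd.
- apply Rle_trans with (sumR (fun _ => cosh (lam * (INR y - INR r))) (paths n y)).
  + apply sumR_le; intros s Hs; rewrite (paths_head _ _ _ Hs); lra.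
  + rewrite sumR_const; unfold npaths; simpl; lra.
- destruct n as [|n]; [lia|].
  rewrite sumR_paths_S, npaths_S, plus_INR.
  change (fun s => cosh (lam * (coord (y :: s) (S d) - INR r)))
    with (fun s => cosh (lam * (coord s d - INR r))).
  set (u := INR y - INR r).
  assert (Hgd : 0 <= cosh_growth lam ^ d)
    by (apply pow_le; left; apply cosh_growth_pos, Hlam).
  assert (Hup := IHd n (S y) r ltac:(lia)).
  replace (INR (S y) - INR r) with (u + 1) in Hup by (unfold u; rewrite S_INR; ring).
  simpl (cosh_growth lam ^ S d).
  destruct y as [|y].
  + set (A := INR (npaths n 1)) in *.
    apply Rle_trans
      with (cosh_growth lam ^ d * (A * cosh (lam * (u + 1)) + 0 * cosh (lam * (u - 1))));
      [simpl (INR 0); lra|].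
    replace (cosh_growth lam * cosh_growth lam ^ d * (A + INR 0) * cosh (lam * u))
      with (cosh_growth lam ^ d * (cosh_growth lam * (A + 0) * cosh (lam * u))) by (simpl; ring).
    apply Rmult_le_compat_l, cosh_step_le; [exact Hgd|lra|split; [lra|apply pos_INR]|].
    unfold u; pose proof (pos_INR r); simpl; lra.
  + assert (Hdown := IHd n y r ltac:(lia)).
    replace (INR y - INR r) with (u - 1) in Hdown by (unfold u; rewrite S_INR; ring).
    set (A := INR (npaths n (S (S y)))) in *; set (B := INR (npaths n y)) in *.
    apply Rle_trans
      with (cosh_growth lam ^ d * (A * cosh (lam * (u + 1)) + B * cosh (lam * (u - 1))));
      [lra|].
    replace (cosh_growth lam * cosh_growth lam ^ d * (A + B) * cosh (lam * u))
      with (cosh_growth lam ^ d * (cosh_growth lam * (A + B) * cosh (lam * u))) by ring.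
    apply Rmult_le_compat_l, cosh_step_le; [exact Hgd|lra| |].
    * split; [apply pos_INR|]; unfold A, B; apply le_INR.
      pose proof (npaths_le_S n y); pose proof (npaths_le_S n (S y)); lia.
    * intro Hu; apply npaths_drift; [lra|]; unfold u; pose proof (pos_INR r); lra.
Qed.

(* Markov property: conditionally on the first [m] steps, the rest of a uniform path
   of length [n] is a uniform path of length [n - m]. *)
Lemma sumR_skipn_le m : forall n x (g : list nat -> R) K, (m <= n)%nat ->
  (forall z, sumR g (paths (n - m) z) <= K * INR (npaths (n - m) z)) ->
  sumR (fun s => g (skipn m s)) (paths n x) <= K * INR (npaths n x).
Proof.
induction m as [|m IH]; intros n x g K Hmn Hg.
- rewrite Nat.sub_0_r in Hg; apply Hg.
- destruct n as [|n]; [lia|]; simpl (S n - S m)%nat in Hg.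
  rewrite sumR_paths_S, npaths_S, plus_INR; cbn [skipn].
  pose proof (IH n (S x) g K ltac:(lia) Hg).
  destruct x as [|x]; [simpl; lra|].
  pose proof (IH n x g K ltac:(lia) Hg); lra.
Qed.

Definition moment_const (p : R) : R := 2 * Rpower (2 * p) p * exp (5 / 4).

Lemma moment_const_pos p : 0 < moment_const p.
Proof.
unfold moment_const; pose proof (exp_pos (5 / 4)); pose proof (exp_pos (p * ln (2 * p))).
unfold Rpower; nra.
Qed.

Lemma sumR_increment_moment p d n z : 0 < p -> (d <= n)%nat ->
  sumR (fun s => rpow (Rabs (coord s d - coord s 0)) p) (paths n z)
  <= moment_const p * rpow (INR d) (p / 2) * INR (npaths n z).
Proof.
intros Hp Hdn.
destruct d as [|d'].
{ change (INR 0) with 0; rewrite rpow_0, Rmult_0_r, Rmult_0_l.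
  apply Rle_trans with (sumR (fun _ => 0) (paths n z)); [|rewrite sumR_const; lra].
  apply sumR_le; intros s _; rewrite Rminus_diag, Rabs_R0, rpow_0; lra. }
set (d := S d') in *.
assert (Hd : 1 <= INR d) by (apply (le_INR 1); unfold d; lia).
assert (Hsqrt : 1 <= sqrt (INR d)) by (rewrite <- sqrt_1; apply sqrt_le_1; lra).
set (lam := / (2 * sqrt (INR d))).
assert (Hlam : 0 < lam) by (apply Rinv_0_lt_compat; lra).
assert (Hlam2 : lam ^ 2 * INR d = 1 / 4).
{ unfold lam; rewrite <- (pow2_sqrt (INR d)) at 2 by lra; field; lra. }
assert (Hscale : Rpower (p / lam) p = Rpower (2 * p) p * Rpower (INR d) (p / 2)).
{ replace (p / lam) with (2 * p * Rpower (INR d) (/ 2))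
    by (rewrite Rpower_sqrt by lra; unfold lam; field; lra).
  rewrite <- Rpower_mult_distr, Rpower_mult by (try apply exp_pos; lra).
  unfold Rdiv; rewrite (Rmult_comm (/ 2) p); ring. }
assert (Hgrowth : cosh_growth lam ^ d <= exp (5 / 4)).
{ replace (5 / 4) with (5 * lam ^ 2 * INR d) by (rewrite Rmult_assoc, Hlam2; field).
  apply cosh_growth_pow_le; split; [lra|].
  unfold lam; rewrite Rinv_mult; apply Rle_trans with (/ 2 * 1); [|lra].
  apply Rmult_le_compat_l; [lra|]; rewrite <- Rinv_1; apply Rinv_le_contravar; lra. }
assert (Hcosh := sumR_cosh_le lam d (Rlt_le _ _ Hlam) n z z Hdn).
rewrite Rminus_diag, Rmult_0_r, cosh_0, Rmult_1_r in Hcosh.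
apply Rle_trans
  with (sumR (fun s => 2 * Rpower (p / lam) p * cosh (lam * (coord s d - INR z))) (paths n z)).
{ apply sumR_le; intros s Hs; rewrite (paths_head _ _ _ Hs); apply rpow_abs_le_cosh; lra. }
rewrite sumR_scal, rpow_pos, Hscale by lra; unfold moment_const.
apply Rle_trans
  with (2 * (Rpower (2 * p) p * Rpower (INR d) (p / 2)) * (exp (5 / 4) * INR (npaths n z))).
- apply Rmult_le_compat_l; [rewrite <- Hscale; left; apply Rmult_lt_0_compat, exp_pos; lra|].
  apply Rle_trans with (1 := Hcosh), Rmult_le_compat_r, Hgrowth; apply pos_INR.
- right; ring.
Qed.

Theorem corollaryA10 :
  forall p : R, 0 < p ->
  exists Cp : R, 0 < Cp /\
    forall (x m k n : nat), (m <= k)%nat -> (k <= n)%nat ->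
      Exp n x (fun s => rpow (Rabs (coord s k - coord s m)) p)
        <= Cp * rpow (INR (k - m)) (p / 2).
Proof.
intros p Hp; exists (moment_const p); split; [apply moment_const_pos|].
intros x m k n Hmk Hkn; apply Exp_le.
set (g := fun s => rpow (Rabs (coord s (k - m) - coord s 0)) p).
apply Rle_trans with (sumR (fun s => g (skipn m s)) (paths n x)).
- apply sumR_le; intros s _; unfold g; rewrite !coord_skipn, Nat.add_0_r.
  replace (m + (k - m))%nat with k by lia; lra.
- apply sumR_skipn_le; [lia|]; intro z.
  apply sumR_increment_moment; [exact Hp|lia].
Qed.
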